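(* Let $n\geq1$, $m\geq0$, and let $(v=v^0\sim v^1\sim\dots\sim v^d=u)$ be a geodesic (shortest path) in the dYoke graph $Z_{n,m}$. Then for every $0\leq i\leq m$, all steps of this path that are shifts at $i$ are shifts in the same direction (all left shifts at $i$ or all right shifts at $i$).
   Context: Elements of $\mathbb{Z}_n$ are identified with representatives in $\{0,\dots,n-1\}$. $Z_{n,m}$ has vertices $u=(u_0,\dots,u_{m+1})\in\mathbb{Z}_n\times\{-1,0,1\}^m\times\mathbb{Z}_n$ with $\sum u_i\equiv0\pmod n$. A step from $v$ to $u$ is a left shift at $i$ ($0\le i\le m$) if $u_j=v_j$ for $j\notin\{i,i+1\}$, $u_i=v_i+1$ and $u_{i+1}=v_{i+1}-1$ (a unit moved from entry $i+1$ to entry $i$), and a right shift at $i$ if $u_i=v_i-1$, $u_{i+1}=v_{i+1}+1$; arithmetic in coordinates $0,m+1$ is in $\mathbb{Z}_n$, in coordinates $1,\dots,m$ in $\mathbb{Z}$ (values must remain in $\{-1,0,1\}$). Two vertices are adjacent iff one is obtained from the other by such a shift. *)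

From HB Require Import structures.
From mathcomp Require Import all_boot all_order all_algebra.
Set Implicit Arguments. Unset Strict Implicit. Unset Printing Implicit Defensive.
Import Order.TTheory GRing.Theory Num.Theory.

(* Vertices of the dYoke graph Z_{n,m} are represented as sequences
   u = [:: u_0; u_1; ...; u_m; u_{m+1}] of integers of size m+2, where
   u_0, u_{m+1} are representatives in {0,...,n-1} of elements of Z_n,
   u_1..u_m are in {-1,0,1}, and the total sum is divisible by n. *)

Local Open Scope ring_scope.

Definition coord (u : seq int) (j : nat) : int := nth 0 u j.

Definition is_vertex (n m : nat) (u : seq int) : Prop :=
  [/\ size u = m.+2,
      0 <= coord u 0 < n%:Z,
      0 <= coord u m.+1 < n%:Z,
      (forall j : nat, (1 <= j <= m)%N -> coord u j \in [:: -1; 0; 1]) &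
      (n%:Z %| \sum_(x <- u) x)%Z].

Definition normc (n m j : nat) (x : int) : int :=
  if (j == 0%N) || (j == m.+1) then (x %% n%:Z)%Z else x.

Definition left_shift (n m i : nat) (v u : seq int) : Prop :=
  [/\ (i <= m)%N,
      (forall j : nat, j != i -> j != i.+1 -> coord u j = coord v j),
      coord u i = normc n m i (coord v i + 1) &
      coord u i.+1 = normc n m i.+1 (coord v i.+1 - 1)].

Definition right_shift (n m i : nat) (v u : seq int) : Prop :=
  [/\ (i <= m)%N,
      (forall j : nat, j != i -> j != i.+1 -> coord u j = coord v j),
      coord u i = normc n m i (coord v i - 1) &
      coord u i.+1 = normc n m i.+1 (coord v i.+1 + 1)].

Definition shift_at (n m i : nat) (v u : seq int) : Prop :=
  left_shift n m i v u \/ right_shift n m i v u.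

Definition adj (n m : nat) (v u : seq int) : Prop :=
  is_vertex n m v /\ is_vertex n m u /\
  exists i : nat, shift_at n m i v u \/ shift_at n m i u v.

Definition is_walk (n m : nat) (p : seq (seq int)) : Prop :=
  p <> [::] /\ (forall x, x \in p -> is_vertex n m x) /\
  (forall k : nat, (k.+1 < size p)%N ->
     adj n m (nth [::] p k) (nth [::] p k.+1)).

Definition is_geodesic (n m : nat) (p : seq (seq int)) : Prop :=
  is_walk n m p /\
  forall q : seq (seq int), is_walk n m q ->
    head [::] q = head [::] p -> last [::] q = last [::] p ->
    (size p <= size q)%N.

(* A vertex u of Z_{n,m} is encoded by a height function h on {0, ..., m}:
   u_c = h_c - h_(c-1) with h_(-1) = h_(m+1) = 0, the two end coordinates read
   mod n.  The middle coordinates lie in {-1, 0, 1} exactly when h is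
   1-Lipschitz, every vertex has such a lift, and a left (right) shift at j is
   the move h_j += 1 (h_j -= 1).  So a walk of length d lifts to heights
   h^0, ..., h^d with consecutive l1-distances at most 1, and conversely two
   Lipschitz heights at l1-distance D are joined by a walk of length D.  If a
   geodesic of length d had both a left and a right shift at i, these two moves
   of h_i would cancel, giving |h^0 - h^d|_1 <= d - 2 and hence a shorter walk
   between the same endpoints. *)

From Pilot Require Import Defs.
From mathcomp Require Import all_boot all_order all_algebra zify.
From Stdlib Require Import Classical.
Set Implicit Arguments.
Unset Strict Implicit.
Unset Printing Implicit Defensive.
Import Order.TTheory GRing.Theory Num.Theory.
Local Open Scope ring_scope.
Local Notation coord := Defs.coord.

(** * Height functions *)

Definition bump (h : nat -> int) (j : nat) (s : int) : nat -> int :=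
  fun c => if c == j then h c + s else h c.

Definition lipschitz (m : nat) (h : nat -> int) : Prop :=
  forall c, (c < m)%N -> `|h c.+1 - h c| <= 1.

Definition height_dist (m : nat) (a b : nat -> int) : nat :=
  (\sum_(c < m.+1) `|a c - b c|)%N.

Lemma height_dist_triangle m a b c :
  (height_dist m a c <= height_dist m a b + height_dist m b c)%N.
Proof. by rewrite /height_dist -big_split /=; apply: leq_sum => i _; lia. Qed.

Lemma eq_height_dist m a b a' b' :
  (forall c, (c <= m)%N -> a c - b c = a' c - b' c) ->
  height_dist m a b = height_dist m a' b'.
Proof. by move=> ab_ab'; apply: eq_bigr => c _; rewrite ab_ab' // -ltnS. Qed.

Lemma height_distxx m a : height_dist m a a = 0%N.
Proof. by rewrite /height_dist big1 // => c _; rewrite subrr. Qed.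

Lemma height_dist_bump m a b i s : (i <= m)%N ->
  (height_dist m (bump a i s) b + absz (a i - b i)%R)%N =
    (height_dist m a b + absz (a i + s - b i)%R)%N.
Proof.
move=> le_im; pose i' : 'I_m.+1 := Ordinal (le_im : (i < m.+1)%N).
rewrite /height_dist (bigD1 i') // [in RHS](bigD1 i') //= /bump eqxx.
rewrite (eq_bigr (fun c : 'I_m.+1 => absz (a c - b c))) => [|c]; first lia.
by rewrite -val_eqE /= => /negbTE ->.
Qed.

Lemma height_dist_bump_le1 m a i s : (i <= m)%N -> s = 1 \/ s = -1 ->
  (height_dist m a (bump a i s) <= 1)%N.
Proof.
move=> le_im s_unit; rewrite /height_dist (bigD1 (Ordinal (le_im : (i < m.+1)%N))) //=.
rewrite big1 => [|c]; first by rewrite /bump eqxx; lia.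
by rewrite /bump -val_eqE /= => /negbTE ->; rewrite subrr.
Qed.

Lemma height_dist_eq0 m a b : height_dist m a b = 0%N ->
  forall c, (c <= m)%N -> a c = b c.
Proof.
move=> /eqP; rewrite sum_nat_eq0 => /forallP ab0 c le_cm.
by have := ab0 (Ordinal (le_cm : (c < m.+1)%N)); rewrite /= absz_eq0 subr_eq0 => /eqP.
Qed.

Section HeightPath.

Variables (m d : nat) (H : nat -> nat -> int).
Hypothesis H_step : forall t, (t < d)%N -> (height_dist m (H t) (H t.+1) <= 1)%N.

Lemma height_dist_path x y : (x <= y)%N -> (y <= d)%N -> (height_dist m (H x) (H y) <= y - x)%N.
Proof.
elim: y => [|y IH] le_xy le_yd.
  by move: le_xy; rewrite leqn0 => /eqP ->; rewrite height_distxx.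
have [->|ne_xy] := eqVneq x y.+1; first by rewrite height_distxx.
have le_xy' : (x <= y)%N by rewrite -ltnS ltn_neqAle ne_xy.
have dist_xy := IH le_xy' (ltnW le_yd).
have := H_step le_yd; have := height_dist_triangle m (H x) (H y) (H y.+1); lia.
Qed.

Lemma height_dist_cancel k l : k != l -> (k < d)%N -> (l < d)%N ->
  (forall c, (c <= m)%N -> H k.+1 c - H k c = H l c - H l.+1 c) ->
  (height_dist m (H 0%N) (H d) <= d - 2)%N.
Proof.
wlog lt_kl : k l / (k < l)%N => [wlog_kl|_ _ lt_ld opposite].
  move=> ne_kl lt_kd lt_ld opposite; have [lt_kl|lt_lk|eq_kl] := ltngtP k l.
  - exact: (wlog_kl k l).
  - by apply: (wlog_kl l k) => // [|c /opposite]; [rewrite eq_sym | lia].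
  - by move: ne_kl; rewrite eq_kl eqxx.
have cancel : height_dist m (H k) (H l.+1) = height_dist m (H k.+1) (H l).
  by apply: eq_height_dist => c /opposite; lia.
have := height_dist_path (leq0n k) (ltnW (ltn_trans lt_kl lt_ld)).
have := height_dist_path lt_kl (ltnW lt_ld); have := height_dist_path lt_ld (leqnn d).
have := height_dist_triangle m (H 0%N) (H k) (H d).
have := height_dist_triangle m (H k) (H l.+1) (H d).
rewrite cancel; lia.
Qed.

End HeightPath.

Lemma lipschitz_neighbor m a c i : lipschitz m a -> (c <= m)%N -> (i <= m)%N ->
  (c.+1 == i) || (c == i.+1) -> `|a c - a i| <= 1.
Proof.
move=> La le_cm le_im /orP [] /eqP ci; subst.
- by have := La c le_im; lia.
- exact: La.
Qed.

Lemma lipschitz_bump m a i s : lipschitz m a ->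
  (forall c, (c <= m)%N -> (c.+1 == i) || (c == i.+1) -> `|a c - (a i + s)| <= 1) ->
  lipschitz m (bump a i s).
Proof.
move=> La near_i c lt_cm; rewrite /bump.
have [ci1|ci1] := eqVneq c.+1 i; have [ci|ci] := eqVneq c i.
- by move: ci1; rewrite ci => /eqP; rewrite (gtn_eqF (ltnSn i)).
- by have := near_i c (ltnW lt_cm); rewrite ci1 eqxx /=; lia.
- by subst c; have := near_i i.+1 lt_cm; rewrite eqxx orbT; lia.
- exact: La.
Qed.

(* Greedy step: among the coordinates where a - b has the sign sg, move a toward
   b at one maximizing sg * a; maximality is what keeps a Lipschitz. *)
Lemma lipschitz_step_toward m a b c :
  lipschitz m a -> lipschitz m b -> (c <= m)%N -> a c != b c ->
  exists i s, [/\ (i <= m)%N, s = 1 \/ s = -1, lipschitz m (bump a i s) &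
                  (absz (a i + s - b i)%R).+1 = absz (a i - b i)%R].
Proof.
move=> La Lb le_cm ne_ab; pose sg : int := if b c < a c then 1 else -1.
have sg_unit : sg = 1 \/ sg = -1 by rewrite /sg; case: ifP; [left | right].
pose P (k : 'I_m.+1) := 0 < sg * (a k - b k).
have Pc : P (Ordinal (le_cm : (c < m.+1)%N)) by move: ne_ab; rewrite /P /sg /=; case: ifP; lia.
case: (arg_maxP (fun k : 'I_m.+1 => sg * a k) Pc) => -[i lt_im] Pi max_i.
rewrite /P /= in Pi max_i; exists i, (- sg); split=> //.
- by case: sg_unit => ->; [right | left; rewrite opprK].
- apply: (lipschitz_bump La) => k le_km near.
  have a_near := lipschitz_neighbor La le_km lt_im near.
  have b_near := lipschitz_neighbor Lb le_km lt_im near.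
  have : sg * a k <= sg * a i.
    have [Pk|nPk] := boolP (P (Ordinal (le_km : (k < m.+1)%N))); first exact: (max_i _ Pk).
    by rewrite /P /= in nPk; case: sg_unit Pi nPk => ->; lia.
  by case: sg_unit => ->; lia.
- by case: sg_unit Pi => ->; lia.
Qed.

(** * Vertices of Z_{n,m} as height functions *)

Definition height_diff (m : nat) (h : nat -> int) (c : nat) : int :=
  (if (c <= m)%N then h c else 0) - (if c is c'.+1 then h c' else 0).

Definition of_height (n m : nat) (h : nat -> int) : seq int :=
  mkseq (fun c => normc n m c (height_diff m h c)) m.+2.

Lemma size_of_height n m h : size (of_height n m h) = m.+2.
Proof. exact: size_mkseq. Qed.

Lemma coord_of_height n m h c : (c < m.+2)%N ->
  coord (of_height n m h) c = normc n m c (height_diff m h c).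
Proof. exact: nth_mkseq. Qed.

Lemma height_diff_inner m h c : (c < m)%N -> height_diff m h c.+1 = h c.+1 - h c.
Proof. by move=> lt_cm; rewrite /height_diff lt_cm. Qed.

Lemma normc_inner n m c x : (c < m)%N -> normc n m c.+1 x = x.
Proof. by move=> lt_cm; rewrite /normc /= eqSS ltn_eqF. Qed.

Lemma eq_of_height n m a b : (forall c, (c <= m)%N -> a c = b c) ->
  of_height n m a = of_height n m b.
Proof.
move=> ab; apply/eq_in_map => c; rewrite mem_iota add0n ltnS => /andP [_ le_c].
rewrite /height_diff; case: c le_c => [|c] le_c /=; first by rewrite ab.
case: ifP => [lt_cm|_]; rewrite !ab //; exact: ltnW.
Qed.

Lemma sum_of_height n m h :
  \sum_(x <- of_height n m h) x = (h 0%N %% n%:Z)%Z + (h m - h 0%N) + (- h m %% n%:Z)%Z.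
Proof.
rewrite big_map -[iota _ _]/(index_iota 0 m.+2) big_nat_recr //= big_nat_recl //.
rewrite (eq_big_nat _ _ (F2 := fun c => h c.+1 - h c)) ?telescope_sumr //.
  by rewrite /normc /height_diff /= eqxx ltnn subr0 sub0r.
by move=> c /andP [_ lt_cm]; rewrite normc_inner ?height_diff_inner.
Qed.

Lemma of_height_vertex n m h : (0 < n)%N -> lipschitz m h -> is_vertex n m (of_height n m h).
Proof.
move=> n_gt0 Lh; split; rewrite ?size_of_height ?coord_of_height //.
- rewrite /normc /height_diff /=; lia.
- rewrite /normc /height_diff eqxx orbT ltnn; lia.
- case=> [//|c] /andP [_ le_cm]; rewrite coord_of_height ?ltnS 1?ltnW //.
  by rewrite normc_inner ?height_diff_inner //; have := Lh c le_cm; rewrite !inE; lia.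
- apply/dvdz_mod0P; rewrite sum_of_height modzDmr -addrA modzDml.
  by rewrite [_ + _](_ : _ = 0) ?mod0z //; lia.
Qed.

Lemma lipschitz_of_vertex n m h : is_vertex n m (of_height n m h) -> lipschitz m h.
Proof.
move=> [_ _ _ v_int _] c lt_cm; have := v_int c.+1; rewrite lt_cm.
rewrite coord_of_height ?ltnS ?(ltnW lt_cm) // normc_inner ?height_diff_inner //.
by rewrite !inE => /(_ isT); lia.
Qed.

Lemma exists_height n m v : is_vertex n m v -> exists h, of_height n m h = v.
Proof.
move=> [size_v v0 vm _ n_dvd]; pose h c := \sum_(0 <= l < c.+1) coord v l.
have h_rec c : h c.+1 = h c + coord v c.+1 by rewrite /h big_nat_recr.
exists h; apply: (@eq_from_nth _ 0); rewrite size_of_height ?size_v // => c lt_c.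
change (coord (of_height n m h) c = coord v c); rewrite coord_of_height //.
case: c lt_c => [|c] lt_c; first by rewrite /normc /height_diff /= subr0 /h big_nat1 modz_small.
rewrite ltnS leq_eqVlt in lt_c; case/orP: lt_c => [/eqP [->]|lt_cm].
  have sum_v : \sum_(x <- v) x = h m + coord v m.+1.
    by rewrite (big_nth 0) size_v -h_rec.
  rewrite /normc /height_diff eqxx orbT ltnn sub0r.
  have -> : - h m = - ((\sum_(x <- v) x) %/ n)%Z * n%:Z + coord v m.+1.
    by rewrite mulNr divzK // sum_v; lia.
  by rewrite modzMDl modz_small.
by rewrite normc_inner ?height_diff_inner // h_rec addrAC subrr add0r.
Qed.

Lemma height_diff_bump m h j s c : (j <= m)%N ->
  height_diff m (bump h j s) c =
    height_diff m h c + (if c == j then s else 0) - (if c == j.+1 then s else 0).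
Proof.
move=> le_jm; rewrite /height_diff /bump; case: c => [|c] /=.
all: do ! case: ifP; do ! case: eqP; lia.
Qed.

Lemma normcD n m c x y : normc n m c (normc n m c x + y) = normc n m c (x + y).
Proof. by rewrite /normc; case: (_ || _) => //; rewrite modzDml. Qed.

Lemma normc_vertex n m u c : is_vertex n m u -> (c <= m.+1)%N ->
  normc n m c (coord u c) = coord u c.
Proof.
move=> [_ u0 um _ _] le_c; rewrite /normc; case: ifP => // /orP [] /eqP ->.
all: exact: modz_small.
Qed.

Lemma coord_of_height_bump_other n m h j s t : (j <= m)%N -> t != j -> t != j.+1 ->
  coord (of_height n m (bump h j s)) t = coord (of_height n m h) t.
Proof.
move=> le_jm /negbTE tj /negbTE tj1; have [lt_t|ge_t] := ltnP t m.+2.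
  by rewrite !coord_of_height // height_diff_bump // tj tj1 addr0 subr0.
by rewrite /coord !nth_default ?size_of_height.
Qed.

Lemma coord_of_height_bump_at n m h j s : (j <= m)%N ->
  coord (of_height n m (bump h j s)) j = normc n m j (coord (of_height n m h) j + s).
Proof.
move=> le_jm; have lt_j : (j < m.+2)%N by rewrite ltnS (leq_trans le_jm).
by rewrite !coord_of_height // height_diff_bump // normcD eqxx (ltn_eqF (ltnSn j)) subr0.
Qed.

Lemma coord_of_height_bump_next n m h j s : (j <= m)%N ->
  coord (of_height n m (bump h j s)) j.+1 = normc n m j.+1 (coord (of_height n m h) j.+1 - s).
Proof.
move=> le_jm; have lt_j : (j.+1 < m.+2)%N by rewrite ltnS.
by rewrite !coord_of_height // height_diff_bump // normcD eqxx (gtn_eqF (ltnSn j)) addr0.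
Qed.

Lemma left_shift_of_height n m h j : (j <= m)%N ->
  left_shift n m j (of_height n m h) (of_height n m (bump h j 1)).
Proof.
move=> le_jm; split=> //; last by rewrite coord_of_height_bump_next.
- by move=> t; apply: coord_of_height_bump_other.
- by rewrite coord_of_height_bump_at.
Qed.

Lemma right_shift_of_height n m h j : (j <= m)%N ->
  right_shift n m j (of_height n m h) (of_height n m (bump h j (-1))).
Proof.
move=> le_jm; split=> //; last by rewrite coord_of_height_bump_next ?opprK.
- by move=> t; apply: coord_of_height_bump_other.
- by rewrite coord_of_height_bump_at.
Qed.

Lemma eq_shifted j v u w : size u = size w ->
  (forall t, t != j -> t != j.+1 -> coord u t = coord v t) ->
  (forall t, t != j -> t != j.+1 -> coord w t = coord v t) ->
  coord u j = coord w j -> coord u j.+1 = coord w j.+1 -> u = w.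
Proof.
move=> size_uw ou ow uwj uwj1; apply: (@eq_from_nth _ 0) => // t _.
have [->|tj] := eqVneq t j; first exact: uwj.
have [->|tj1] := eqVneq t j.+1; first exact: uwj1.
by rewrite -[nth _ u t]/(coord u t) -[nth _ w t]/(coord w t) ou ?ow.
Qed.

Lemma left_shift_functional n m j v u w :
  left_shift n m j v u -> left_shift n m j v w -> size u = size w -> u = w.
Proof.
move=> [_ ou uj uj1] [_ ow wj wj1] size_uw.
by apply: (eq_shifted size_uw ou ow); rewrite ?uj ?wj ?uj1 ?wj1.
Qed.

Lemma right_shift_functional n m j v u w :
  right_shift n m j v u -> right_shift n m j v w -> size u = size w -> u = w.
Proof.
move=> [_ ou uj uj1] [_ ow wj wj1] size_uw.
by apply: (eq_shifted size_uw ou ow); rewrite ?uj ?wj ?uj1 ?wj1.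
Qed.

Lemma right_shift_of_left_shift n m j u v : is_vertex n m u ->
  left_shift n m j u v -> right_shift n m j v u.
Proof.
move=> u_vert [le_jm ou uj uj1]; split=> //.
- by move=> t tj tj1; rewrite ou.
- by rewrite uj normcD addrK normc_vertex // (leq_trans le_jm).
- by rewrite uj1 normcD subrK normc_vertex.
Qed.

Lemma left_shift_of_right_shift n m j u v : is_vertex n m u ->
  right_shift n m j u v -> left_shift n m j v u.
Proof.
move=> u_vert [le_jm ou uj uj1]; split=> //.
- by move=> t tj tj1; rewrite ou.
- by rewrite uj normcD subrK normc_vertex // (leq_trans le_jm).
- by rewrite uj1 normcD addrK normc_vertex.
Qed.

(** * Walks and their lifts *)

Lemma is_walk1 n m x : is_vertex n m x -> is_walk n m [:: x].
Proof. by move=> x_vert; split=> //; split=> [y /[!inE] /eqP ->|]. Qed.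

Lemma is_walk_cons n m x y q :
  is_walk n m (x :: y :: q) <-> adj n m x y /\ is_walk n m (y :: q).
Proof.
split=> [[_ [vert step]] | [xy [_ [vert step]]]].
  split; first exact: (step 0%N).
  split=> //; split=> [z z_in|k lt_k]; last exact: (step k.+1).
  by apply: vert; rewrite inE z_in orbT.
split=> //; split=> [z /[!inE] /orP [/eqP ->|z_in]|[|k] lt_k] //; last exact: step.
  by case: xy.
exact: vert.
Qed.

Lemma adj_of_height_bump n m a j s : (0 < n)%N -> (j <= m)%N -> s = 1 \/ s = -1 ->
  lipschitz m a -> lipschitz m (bump a j s) ->
  adj n m (of_height n m a) (of_height n m (bump a j s)).
Proof.
move=> n_gt0 le_jm s_unit La Lbump; split; [|split]; try exact: of_height_vertex.
exists j; left; case: s_unit => ->; [left; exact: left_shift_of_height | right].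
exact: right_shift_of_height.
Qed.

Lemma exists_walk_of_heights n m a b : (0 < n)%N -> lipschitz m a -> lipschitz m b ->
  exists q, [/\ is_walk n m q, head [::] q = of_height n m a,
                last [::] q = of_height n m b & size q = (height_dist m a b).+1].
Proof.
move=> n_gt0; move Ed: (height_dist m a b) => d.
elim: d a Ed => [|d IH] a Ed La Lb.
  exists [:: of_height n m a]; split=> //; first exact/is_walk1/of_height_vertex.
  exact/eq_of_height/height_dist_eq0.
have /existsP [[c lt_cm] /= ne_ab] : [exists c : 'I_m.+1, a c != b c].
  apply: contraT; rewrite negb_exists => /forallP a_eq_b.
  suff : height_dist m a b = 0%N by rewrite Ed.
  by rewrite /height_dist big1 // => k _; move: (a_eq_b k); rewrite negbK => /eqP ->; rewrite subrr.
have [i [s [le_im s_unit Lbump dist_i]]] := lipschitz_step_toward La Lb lt_cm ne_ab.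
have dist_bump : height_dist m (bump a i s) b = d.
  by have := height_dist_bump a b s le_im; rewrite Ed -dist_i; lia.
have [[|y q] [walk_q head_q last_q size_q]] := IH _ dist_bump Lbump Lb; first by case: walk_q.
exists (of_height n m a :: y :: q); split=> //=; last by rewrite -size_q.
apply/is_walk_cons; split=> //; rewrite /= in head_q; rewrite head_q.
exact: adj_of_height_bump.
Qed.

Lemma of_height_left_shift n m h j y :
  left_shift n m j (of_height n m h) y -> size y = m.+2 -> of_height n m (bump h j 1) = y.
Proof.
move=> hy size_y; have le_jm : (j <= m)%N by case: hy.
by apply: left_shift_functional (left_shift_of_height n h le_jm) hy _; rewrite size_of_height.
Qed.

Lemma of_height_right_shift n m h j y :
  right_shift n m j (of_height n m h) y -> size y = m.+2 -> of_height n m (bump h j (-1)) = y.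
Proof.
move=> hy size_y; have le_jm : (j <= m)%N by case: hy.
by apply: right_shift_functional (right_shift_of_height n h le_jm) hy _; rewrite size_of_height.
Qed.

(* (j, s) labels a step x ~ y as the height move bump _ j s.  A step that is a
   shift at i gets a label at i; if it is both a left and a right shift at i
   (possible only when n <= 2), the left label is used. *)
Definition shift_label (n m i : nat) (x y : seq int) (j : nat) (s : int) : Prop :=
  [/\ (j <= m)%N, s = 1 \/ s = -1,
      left_shift n m i x y -> j = i /\ s = 1 &
      right_shift n m i x y -> ~ left_shift n m i x y -> j = i /\ s = -1].

Lemma lift_adj n m i h y : adj n m (of_height n m h) y ->
  exists j s, shift_label n m i (of_height n m h) y j s /\ of_height n m (bump h j s) = y.
Proof.
set x := of_height n m h; move=> [x_vert [y_vert [j xy]]]; have [size_y _ _ _ _] := y_vert.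
have [Li|nLi] := classic (left_shift n m i x y).
  exists i, 1; split; last exact: of_height_left_shift.
  by split=> //; [case: Li | left].
have [Ri|nRi] := classic (right_shift n m i x y).
  exists i, (-1); split; last exact: of_height_right_shift.
  by split=> //; [case: Ri | right].
have [s shift_xy] : exists s : int,
    (s = 1 /\ left_shift n m j x y) \/ (s = -1 /\ right_shift n m j x y).
  case: xy => [[L|R]|[L|R]]; [exists 1 | exists (-1) | exists (-1) | exists 1].
  - by left.
  - by right.
  - by right; split=> //; apply: right_shift_of_left_shift.
  - by left; split=> //; apply: left_shift_of_right_shift.
exists j, s; case: shift_xy => -[-> shift_xy]; split.
- by split=> //; [case: shift_xy | left].
- exact: of_height_left_shift.
- by split=> //; [case: shift_xy | right].
- exact: of_height_right_shift.
Qed.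

Lemma lift_walk n m i p h : is_walk n m p -> of_height n m h = head [::] p ->
  exists H : nat -> nat -> int, [/\ H 0%N = h,
    forall t, (t < size p)%N -> of_height n m (H t) = nth [::] p t &
    forall t, (t.+1 < size p)%N -> exists j s,
      shift_label n m i (nth [::] p t) (nth [::] p t.+1) j s /\ H t.+1 = bump (H t) j s].
Proof.
elim: p h => [|x [|y q] IH] h walk_p //= hx.
  by exists (fun=> h); split=> // -[].
move/is_walk_cons: walk_p => [xy walk_yq]; rewrite -hx in xy.
have [j [s [label_xy hy]]] := lift_adj i xy.
have [H [H0 lift_yq step_yq]] := IH _ walk_yq hy.
exists (fun t => if t is t'.+1 then H t' else h); split=> // [[|t] lt_t|[|t] lt_t] /=.
- exact: hx.
- exact: lift_yq.
- by exists j, s; rewrite H0 -hx.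
- exact: step_yq.
Qed.

Lemma geodesic_no_opposite_shifts n m i p k l : (0 < n)%N -> is_geodesic n m p ->
  (k.+1 < size p)%N -> (l.+1 < size p)%N ->
  left_shift n m i (nth [::] p k) (nth [::] p k.+1) ->
  ~ right_shift n m i (nth [::] p k) (nth [::] p k.+1) ->
  right_shift n m i (nth [::] p l) (nth [::] p l.+1) ->
  ~ left_shift n m i (nth [::] p l) (nth [::] p l.+1) -> False.
Proof.
move=> n_gt0 [walk_p p_min] lt_k lt_l Lk nRk Rl nLl.
set d := (size p).-1; have size_p : size p = d.+1 by rewrite prednK // (ltn_trans _ lt_k).
have p_vert t : (t <= d)%N -> is_vertex n m (nth [::] p t).
  by move=> le_td; case: walk_p => _ [+ _]; apply; rewrite mem_nth ?size_p.
have [h0 h0_head] : exists h, of_height n m h = head [::] p.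
  by apply: exists_height; rewrite -nth0; apply: p_vert.
have [H [_ lift_p step_p]] := lift_walk i walk_p h0_head.
have H_step t : (t < d)%N -> (height_dist m (H t) (H t.+1) <= 1)%N.
  move=> lt_td; have lt_t : (t.+1 < size p)%N by rewrite size_p.
  have [j [s [[le_jm s_unit _ _] ->]]] := step_p t lt_t.
  exact: height_dist_bump_le1.
have [_ [_ [[_ _ /(_ Lk) [-> ->] _] Hk]]] := step_p k lt_k.
have [_ [_ [[_ _ _ /(_ Rl nLl) [-> ->]] Hl]]] := step_p l lt_l.
have ne_kl : k != l by apply/eqP => eq_kl; apply: nRk; rewrite eq_kl.
have lt_kd : (k < d)%N by rewrite -ltnS -size_p.
have lt_ld : (l < d)%N by rewrite -ltnS -size_p.
have /(height_dist_cancel H_step ne_kl lt_kd lt_ld) dist_0d :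
    forall c, (c <= m)%N -> H k.+1 c - H k c = H l c - H l.+1 c.
  by move=> c _; rewrite Hk Hl /bump; case: (c == i); lia.
have lip_H t : (t <= d)%N -> lipschitz m (H t).
  by move=> le_td; apply: (@lipschitz_of_vertex n); rewrite lift_p ?size_p //; apply: p_vert.
have [q [walk_q head_q last_q size_q]] :=
  exists_walk_of_heights n_gt0 (lip_H 0%N (leq0n d)) (lip_H d (leqnn d)).
have := p_min q walk_q; rewrite head_q last_q !lift_p ?size_p // nth0 /d nth_last.
by move=> /(_ erefl erefl); rewrite size_q; lia.
Qed.

Theorem lemma3p2 (n m : nat) (p : seq (seq int)) :
  (1 <= n)%N -> is_geodesic n m p ->
  forall i : nat, (i <= m)%N ->
    (forall k : nat, (k.+1 < size p)%N ->
       shift_at n m i (nth [::] p k) (nth [::] p k.+1) ->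
       left_shift n m i (nth [::] p k) (nth [::] p k.+1)) \/
    (forall k : nat, (k.+1 < size p)%N ->
       shift_at n m i (nth [::] p k) (nth [::] p k.+1) ->
       right_shift n m i (nth [::] p k) (nth [::] p k.+1)).
Proof.
move=> n_gt0 geodesic_p i _.
pose strict_left k := left_shift n m i (nth [::] p k) (nth [::] p k.+1) /\
                      ~ right_shift n m i (nth [::] p k) (nth [::] p k.+1).
have [[k [lt_k [Lk nRk]]]|no_strict_left] := classic (exists k, (k.+1 < size p)%N /\ strict_left k).
  left=> l lt_l shift_l; apply: NNPP => nLl.
  have Rl : right_shift n m i (nth [::] p l) (nth [::] p l.+1) by case: shift_l.
  exact: (geodesic_no_opposite_shifts n_gt0 geodesic_p lt_k lt_l Lk nRk Rl nLl).
right=> l lt_l shift_l; apply: NNPP => nRl; apply: no_strict_left.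
by exists l; split=> //; split=> //; case: shift_l.
Qed.
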